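(* Let $\gamma:\mathrm{Cl}(V,h)\to\mathrm{End}_\mathbb{C}(S)$ be a weakly-faithful complex Clifford representation. Then the complex Lipschitz group $\mathrm{L}_\gamma$ is canonically isomorphic to the automorphism group of $\gamma$ in the category $\mathrm{\mathbb{C}lRep}_w$, via $(\varphi_0,\varphi)\mapsto\varphi$. In particular, the isomorphism class of the group $\mathrm{L}_\gamma$ depends only on the isomorphism class of $\gamma$ in $\mathrm{\mathbb{C}lRep}_w$.
   Context: $(V,h)$ is a finite-dimensional real vector space with non-degenerate symmetric bilinear form, $\mathrm{Cl}(V,h)$ its real Clifford algebra; an isometry $\varphi_0$ induces the unital algebra morphism $\mathrm{Cl}(\varphi_0)$ extending it. A complex Clifford representation is a unital real-algebra morphism $\gamma:\mathrm{Cl}(V,h)\to\mathrm{End}_\mathbb{C}(S)$, $S$ a finite-dimensional complex vector space; weakly-faithful means $\gamma|_V$ injective. A morphism of complex Clifford representations $\gamma\to\gamma'$ (with $\gamma':\mathrm{Cl}(V',h')\to\mathrm{End}_\mathbb{C}(S')$) is a pair $(\varphi_0,\varphi)$, $\varphi_0:(V,h)\to(V',h')$ an isometry and $\varphi:S\to S'$ $\mathbb{C}$-linear, with $\gamma'(\mathrm{Cl}(\varphi_0)(x))\circ\varphi=\varphi\circ\gamma(x)$ for all $x$; composition is componentwise. $\mathrm{\mathbb{C}lRep}_w$ is the category of weakly-faithful complex Clifford representations with these morphisms; an automorphism of $\gamma$ is an isomorphism $\gamma\to\gamma$ (with $\varphi_0\in\mathrm{O}(V,h)$ not necessarily the identity).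 The complex Lipschitz group is $\mathrm{L}_\gamma=\{\varphi\in\mathrm{Aut}_\mathbb{C}(S)\,|\,\varphi\gamma(V)\varphi^{-1}=\gamma(V)\}$. *)

From HB Require Import structures.
From mathcomp Require Import all_boot all_order all_algebra.
From mathcomp Require Import reals.
From mathcomp Require Import complex.
Set Implicit Arguments. Unset Strict Implicit. Unset Printing Implicit Defensive.
Import Order.TTheory GRing.Theory Num.Theory.
Local Open Scope ring_scope.

Section CliffordDefs.
Variable R : realType.
Local Notation C := (R[i]).

Definition bform n (H : 'M[R]_n) (u v : 'rV[R]_n) : R := (u *m H *m v^T) 0 0.

Definition nondeg_sym_form n (H : 'M[R]_n) : Prop := H^T = H /\ H \in unitmx.

Definition rlinear n n' (f : 'rV[R]_n -> 'rV[R]_n') : Prop :=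
  forall (a : R) u v, f (a *: u + v) = a *: f u + f v.

Definition isometry n n' (H : 'M[R]_n) (H' : 'M[R]_n') (f : 'rV[R]_n -> 'rV[R]_n') : Prop :=
  rlinear f /\ forall u v, bform H' (f u) (f v) = bform H u v.

(* A unital real-algebra morphism gamma : Cl(V,h) -> End_C(S), S = C^m (column vectors),
   is given (universal property of Cl(V,h)) by its restriction g to V: an R-linear map
   with g(v)^2 = h(v,v) 1 (Clifford relation v.v = h(v,v) in Cl(V,h)). *)
Definition clifford_map n (H : 'M[R]_n) m (g : 'rV[R]_n -> 'M[C]_m) : Prop :=
  (forall (a : R) u v, g (a *: u + v) = (a%:C)%C *: g u + g v) /\
  (forall v, g v *m g v = ((bform H v v)%:C)%C%:M).

(* Elements of Cl(V,h): finite real combinations sum_j c_j v_{j,1} ... v_{j,k_j}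
   of products of vectors (these exhaust Cl(V,h)). *)
Definition cl_elt n := seq (R * seq 'rV[R]_n).

Definition word_img n m (g : 'rV[R]_n -> 'M[C]_m) (w : seq 'rV[R]_n) : 'M[C]_m :=
  foldr (fun v A => g v *m A) 1%:M w.

Definition gamma_ext n m (g : 'rV[R]_n -> 'M[C]_m) (x : cl_elt n) : 'M[C]_m :=
  \sum_(t <- x) ((t.1)%:C)%C *: word_img g t.2.

Definition cl_map n n' (f : 'rV[R]_n -> 'rV[R]_n') (x : cl_elt n) : cl_elt n' :=
  map (fun t => (t.1, map f t.2)) x.

Definition weakly_faithful n m (g : 'rV[R]_n -> 'M[C]_m) : Prop := injective g.

Definition cl_morphism n (H : 'M[R]_n) m (g : 'rV[R]_n -> 'M[C]_m)
    n' (H' : 'M[R]_n') m' (g' : 'rV[R]_n' -> 'M[C]_m')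
    (f : 'rV[R]_n -> 'rV[R]_n') (phi : 'M[C]_(m', m)) : Prop :=
  isometry H H' f /\
  forall x : cl_elt n, gamma_ext g' (cl_map f x) *m phi = phi *m gamma_ext g x.

Definition cl_iso n (H : 'M[R]_n) m (g : 'rV[R]_n -> 'M[C]_m)
    n' (H' : 'M[R]_n') m' (g' : 'rV[R]_n' -> 'M[C]_m')
    (f : 'rV[R]_n -> 'rV[R]_n') (phi : 'M[C]_(m', m)) : Prop :=
  cl_morphism H g H' g' f phi /\
  exists (f' : 'rV[R]_n' -> 'rV[R]_n) (phi' : 'M[C]_(m, m')),
    [/\ cl_morphism H' g' H g f' phi',
        (forall v, f' (f v) = v), (forall v, f (f' v) = v),
        phi' *m phi = 1%:M & phi *m phi' = 1%:M].

Definition cl_aut n (H : 'M[R]_n) m (g : 'rV[R]_n -> 'M[C]_m)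
    (f : 'rV[R]_n -> 'rV[R]_n) (phi : 'M[C]_m) : Prop :=
  cl_iso H g H g f phi.

Definition lipschitz n m (g : 'rV[R]_n -> 'M[C]_m) (phi : 'M[C]_m) : Prop :=
  phi \in unitmx /\
  (forall v, exists w, phi *m g v *m invmx phi = g w) /\
  (forall w, exists v, phi *m g v *m invmx phi = g w).

End CliffordDefs.

From Pilot Require Import Defs.
From HB Require Import structures.
From mathcomp Require Import all_boot all_order all_algebra.
From mathcomp Require Import reals.
From mathcomp Require Import complex.
From mathcomp Require Import ring.
Import Order.TTheory GRing.Theory Num.Theory.
Local Open Scope ring_scope.

(* An automorphism (f, phi) of gamma is determined by what it does on V, where
   it reads gamma (f v) = phi gamma(v) phi^-1; hence phi normalizes gamma(V).
   Conversely, for phi in L_gamma, weak faithfulness defines f by that same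
   identity; f is linear because gamma is, and squaring the Clifford relation
   gamma(v)^2 = h(v,v) shows that f preserves h(v,v), hence h by polarization.
   An isomorphism (f, psi) : gamma -> gamma' transports L_gamma onto L_gamma'
   by conjugation with psi. *)

Section LipschitzAutomorphisms.
Set Implicit Arguments. Unset Strict Implicit.
Variable R : realType.
Local Notation C := (R[i]).

Lemma bformDl n (H : 'M[R]_n) u v w : bform H (u + v) w = bform H u w + bform H v w.
Proof. by rewrite /bform !mulmxDl mxE. Qed.

Lemma bformDr n (H : 'M[R]_n) u v w : bform H w (u + v) = bform H w u + bform H w v.
Proof. by rewrite /bform raddfD /= mulmxDr mxE. Qed.

Lemma bformC n (H : 'M[R]_n) u v : H^T = H -> bform H v u = bform H u v.
Proof.
move=> sH; rewrite /bform.
have -> : (u *m H *m v^T) 0 0 = (u *m H *m v^T)^T 0 0 by rewrite [RHS]mxE.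
by rewrite !trmx_mul trmxK sH mulmxA.
Qed.

Lemma bform_polar n (H : 'M[R]_n) u v : H^T = H ->
  bform H u v *+ 2 = bform H (u + v) (u + v) - bform H u u - bform H v v.
Proof.
move=> sH; rewrite !bformDl !bformDr [bform H v u]bformC // mulr2n.
set a := bform H u u; set b := bform H v v; set c := bform H u v.
ring.
Qed.

Lemma quad_preserving_isometry n n' (H : 'M[R]_n) (H' : 'M[R]_n') f :
  H^T = H -> H'^T = H' -> rlinear f ->
  (forall v, bform H' (f v) (f v) = bform H v v) -> Defs.isometry H H' f.
Proof.
move=> sH sH' lin_f quad_f; split=> // u v.
have f_add x y : f (x + y) = f x + f y by have := lin_f 1 x y; rewrite !scale1r.
apply: (mulIf (x := 2%:R)); first by rewrite pnatr_eq0.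
by rewrite !mulr_natr !bform_polar // -f_add !quad_f.
Qed.

Lemma isometry_comp n1 n2 n3 (H1 : 'M[R]_n1) (H2 : 'M[R]_n2) (H3 : 'M[R]_n3) f1 f2 :
  Defs.isometry H1 H2 f1 -> Defs.isometry H2 H3 f2 -> Defs.isometry H1 H3 (f2 \o f1).
Proof.
move=> [lin1 quad1] [lin2 quad2]; split=> [a u v | u v] /=.
  by rewrite lin1 lin2.
by rewrite quad2 quad1.
Qed.

Lemma isometry_inv n n' (H : 'M[R]_n) (H' : 'M[R]_n') f f' :
  cancel f f' -> cancel f' f -> Defs.isometry H H' f -> Defs.isometry H' H f'.
Proof.
move=> fK f'K [lin_f quad_f]; split=> [a u v | u v].
  by rewrite -{1}(f'K u) -{1}(f'K v) -lin_f fK.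
by rewrite -quad_f !f'K.
Qed.

Lemma word_img_intertwine n n' m m' (g : 'rV[R]_n -> 'M[C]_m)
    (g' : 'rV[R]_n' -> 'M[C]_m') f (phi : 'M[C]_(m', m)) :
  (forall v, g' (f v) *m phi = phi *m g v) ->
  forall w, word_img g' (map f w) *m phi = phi *m word_img g w.
Proof.
move=> gf; elim=> [|v w IHw] /=; first by rewrite mul1mx mulmx1.
by rewrite -mulmxA IHw !mulmxA gf.
Qed.

Lemma cl_morphismP n (H : 'M[R]_n) m (g : 'rV[R]_n -> 'M[C]_m)
    n' (H' : 'M[R]_n') m' (g' : 'rV[R]_n' -> 'M[C]_m') f (phi : 'M[C]_(m', m)) :
  cl_morphism H g H' g' f phi <->
  Defs.isometry H H' f /\ forall v, g' (f v) *m phi = phi *m g v.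
Proof.
split=> -[iso_f gf]; split=> //.
  move=> v; have := gf [:: (1, [:: v])].
  by rewrite /gamma_ext /cl_map /= !big_seq1 /= !scale1r !mulmx1.
move=> x; rewrite /gamma_ext /cl_map big_map.
elim: x => [|t x IHx]; first by rewrite !big_nil mul0mx mulmx0.
rewrite !big_cons mulmxDl mulmxDr IHx -scalemxAl -scalemxAr /=.
by rewrite (word_img_intertwine gf).
Qed.

Lemma cl_autP n (H : 'M[R]_n) m (g : 'rV[R]_n -> 'M[C]_m) f phi :
  cl_aut H g f phi <->
  [/\ phi \in unitmx, Defs.isometry H H f, bijective f &
      forall v, g (f v) *m phi = phi *m g v].
Proof.
split.
  move=> [/cl_morphismP[iso_f gf] [f' [phi' [_ f'K fK _ phiK]]]].
  split=> //; last by exists f'.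
  by case/mulmx1_unit: phiK.
move=> [phi_unit iso_f [f' fK f'K] gf].
split; first exact/cl_morphismP.
exists f', (invmx phi); split=> //; [|exact: mulVmx|exact: mulmxV].
apply/cl_morphismP; split; first exact: isometry_inv iso_f.
move=> w; rewrite -{2}[w]f'K -[g (f (f' w))](mulmxK phi_unit) gf.
by rewrite !mulmxA mulVmx // mul1mx.
Qed.

Lemma cl_aut_lipschitz n (H : 'M[R]_n) m (g : 'rV[R]_n -> 'M[C]_m) f phi :
  cl_aut H g f phi -> lipschitz g phi.
Proof.
case/cl_autP=> phi_unit _ [f' _ f'K] gf.
have conj_g v : phi *m g v *m invmx phi = g (f v) by rewrite -gf mulmxK.
split=> //; split=> [v | w]; first by exists (f v).
by exists (f' w); rewrite conj_g f'K.
Qed.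

Lemma cl_aut_comp n (H : 'M[R]_n) m (g : 'rV[R]_n -> 'M[C]_m) f1 phi1 f2 phi2 :
  cl_aut H g f1 phi1 -> cl_aut H g f2 phi2 -> cl_aut H g (f1 \o f2) (phi1 *m phi2).
Proof.
case/cl_autP=> unit1 iso1 bij1 gf1 /cl_autP[unit2 iso2 bij2 gf2].
apply/cl_autP; split.
- by rewrite unitmx_mul unit1 unit2.
- exact: isometry_comp iso2 iso1.
- exact: bij_comp.
- by move=> v /=; rewrite mulmxA gf1 -mulmxA gf2 mulmxA.
Qed.

Lemma cl_aut_inj n (H : 'M[R]_n) m (g : 'rV[R]_n -> 'M[C]_m) f1 f2 phi :
  weakly_faithful g -> cl_aut H g f1 phi -> cl_aut H g f2 phi -> f1 =1 f2.
Proof.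
move=> g_inj /cl_autP[phi_unit _ _ gf1] /cl_autP[_ _ _ gf2] v.
by apply/g_inj/(can_inj (mulmxK phi_unit)); rewrite /= gf1 gf2.
Qed.

Lemma lipschitz_intertwiner n m (g : 'rV[R]_n -> 'M[C]_m) phi :
  weakly_faithful g -> lipschitz g phi ->
  exists2 f, bijective f & forall v, g (f v) *m phi = phi *m g v.
Proof.
move=> g_inj [phi_unit [img_g preimg_g]].
have conj_inj : injective (fun A => phi *m A *m invmx phi).
  apply: (can_inj (g := fun A => invmx phi *m A *m phi)) => A.
  by rewrite !mulmxA mulmxKV // mulVmx // mul1mx.
have ex_f v : exists w, phi *m g v *m invmx phi == g w.
  by have [w /eqP] := img_g v; exists w.
have ex_f' w : exists v, phi *m g v *m invmx phi == g w.
  by have [v /eqP] := preimg_g w; exists v.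
pose f v := xchoose (ex_f v); pose f' w := xchoose (ex_f' w).
have conj_f v : phi *m g v *m invmx phi = g (f v) by apply/eqP/(xchooseP (ex_f v)).
have conj_f' w : phi *m g (f' w) *m invmx phi = g w by apply/eqP/(xchooseP (ex_f' w)).
exists f; last by move=> v; rewrite -conj_f mulmxKV.
exists f' => [v | w]; apply: g_inj; last by rewrite -conj_f conj_f'.
by apply: conj_inj; rewrite /= conj_f' conj_f.
Qed.

Section Intertwiners.
Variables (n m : nat) (H : 'M[R]_n) (g : 'rV[R]_n -> 'M[C]_m).
Variables (f : 'rV[R]_n -> 'rV[R]_n) (phi : 'M[C]_m).
Hypotheses (g_cl : clifford_map H g) (g_inj : weakly_faithful g).
Hypotheses (phi_unit : phi \in unitmx) (gf : forall v, g (f v) *m phi = phi *m g v).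

Lemma intertwiner_rlinear : rlinear f.
Proof.
move=> a u v; apply/g_inj/(can_inj (mulmxK phi_unit)) => /=.
by rewrite gf !g_cl.1 mulmxDl mulmxDr -scalemxAl -scalemxAr !gf.
Qed.

Lemma intertwiner_quad v : bform H (f v) (f v) = bform H v v.
Proof.
have [m0 | m_gt0] := posnP m.
  (* For S = 0, weak faithfulness forces V = 0. *)
  suff -> : f v = v by [].
  by apply: g_inj; move: (g (f v)) (g v); rewrite m0 => A B; rewrite !thinmx0.
have : g (f v) *m g (f v) *m phi = phi *m (g v *m g v).
  by rewrite -mulmxA gf !mulmxA gf.
rewrite !g_cl.2 [phi *m _]scalar_mxC => /(can_inj (mulmxK phi_unit)).
move/matrixP/(_ (Ordinal m_gt0) (Ordinal m_gt0)); rewrite !mxE eqxx /= !mulr1n.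
by case.
Qed.

End Intertwiners.

Lemma lipschitz_cl_aut n (H : 'M[R]_n) m (g : 'rV[R]_n -> 'M[C]_m) phi :
  H^T = H -> clifford_map H g -> weakly_faithful g ->
  lipschitz g phi -> exists f, cl_aut H g f phi.
Proof.
move=> sH g_cl g_inj lip_phi; have phi_unit := lip_phi.1.
have [f bij_f gf] := lipschitz_intertwiner g_inj lip_phi.
exists f; apply/cl_autP; split=> //.
apply: quad_preserving_isometry => //.
  exact: intertwiner_rlinear g_cl g_inj phi_unit gf.
exact: intertwiner_quad g_cl g_inj phi_unit gf.
Qed.

Definition mx_conj m m' (psi : 'M[C]_(m', m)) (psi' : 'M[C]_(m, m')) (A : 'M[C]_m)
  : 'M[C]_m' := psi *m A *m psi'.

Section Conjugation.
Variables (m m' : nat) (psi : 'M[C]_(m', m)) (psi' : 'M[C]_(m, m')).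
Hypotheses (psi'K : psi' *m psi = 1%:M) (psiK : psi *m psi' = 1%:M).

Lemma mx_conjM A B : mx_conj psi psi' (A *m B) = mx_conj psi psi' A *m mx_conj psi psi' B.
Proof. by rewrite /mx_conj !mulmxA -(mulmxA _ psi') psi'K mulmx1. Qed.

Lemma mx_conjK : cancel (mx_conj psi psi') (mx_conj psi' psi).
Proof. by move=> A; rewrite /mx_conj !mulmxA psi'K mul1mx -mulmxA psi'K mulmx1. Qed.

Lemma mx_conj_inv A : A \in unitmx ->
  mx_conj psi psi' A *m mx_conj psi psi' (invmx A) = 1%:M.
Proof. by move=> A_unit; rewrite -mx_conjM mulmxV // /mx_conj mulmx1 psiK. Qed.

Lemma unitmx_conj A : A \in unitmx -> mx_conj psi psi' A \in unitmx.
Proof. by move/mx_conj_inv/mulmx1_unit => []. Qed.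

Lemma invmx_conj A : A \in unitmx ->
  invmx (mx_conj psi psi' A) = mx_conj psi psi' (invmx A).
Proof.
move=> A_unit; rewrite -[LHS]mulmx1 -(mx_conj_inv A_unit).
by rewrite mulKmx // unitmx_conj.
Qed.

Lemma lipschitz_conj n (g : 'rV[R]_n -> 'M[C]_m) (g' : 'rV[R]_n -> 'M[C]_m') p :
  (forall v, g' v = mx_conj psi psi' (g v)) ->
  lipschitz g p -> lipschitz g' (mx_conj psi psi' p).
Proof.
move=> g'E [p_unit [img_g preimg_g]].
have conj_g' v : mx_conj psi psi' p *m g' v *m invmx (mx_conj psi psi' p)
    = mx_conj psi psi' (p *m g v *m invmx p).
  by rewrite g'E invmx_conj // !mx_conjM.
split; first exact: unitmx_conj.
split=> [v | w].
  by have [w e] := img_g v; exists w; rewrite conj_g' e g'E.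
by have [v e] := preimg_g w; exists v; rewrite conj_g' e g'E.
Qed.

End Conjugation.

Lemma lipschitz_reparam n n' m (g : 'rV[R]_n' -> 'M[C]_m)
    (f : 'rV[R]_n -> 'rV[R]_n') f' p :
  cancel f' f -> lipschitz (g \o f) p -> lipschitz g p.
Proof.
move=> f'K [p_unit [img_g preimg_g]]; split=> //; split=> [v | w].
  by have [w] := img_g (f' v); rewrite /= f'K => e; exists (f w).
by have [v] := preimg_g (f' w); rewrite /= f'K => e; exists (f v).
Qed.

Lemma lipschitz_transport n n' m m' (g : 'rV[R]_n -> 'M[C]_m)
    (g' : 'rV[R]_n' -> 'M[C]_m') f f' (psi : 'M[C]_(m', m)) psi' p :
  psi' *m psi = 1%:M -> psi *m psi' = 1%:M -> cancel f' f ->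
  (forall v, g' (f v) *m psi = psi *m g v) ->
  lipschitz g p -> lipschitz g' (mx_conj psi psi' p).
Proof.
move=> psi'K psiK f'K gf lip_p; apply: (lipschitz_reparam f'K).
apply: (lipschitz_conj psi'K psiK _ lip_p) => v /=.
by rewrite /mx_conj -gf -mulmxA psiK mulmx1.
Qed.

Lemma cl_iso_lipschitz n (H : 'M[R]_n) m (g : 'rV[R]_n -> 'M[C]_m)
    n' (H' : 'M[R]_n') m' (g' : 'rV[R]_n' -> 'M[C]_m') f (psi : 'M[C]_(m', m)) :
  cl_iso H g H' g' f psi ->
  exists F : 'M[C]_m -> 'M[C]_m',
    [/\ forall p, lipschitz g p -> lipschitz g' (F p),
        forall p q, F (p *m q) = F p *m F q,
        injective F &
        forall p', lipschitz g' p' -> exists p, lipschitz g p /\ F p = p'].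
Proof.
move=> [/cl_morphismP[_ gf] [f' [psi' [/cl_morphismP[_ gf'] f'K fK psi'K psiK]]]].
exists (mx_conj psi psi'); split.
- by move=> p; apply: lipschitz_transport gf.
- exact: mx_conjM psi'K.
- exact: can_inj (mx_conjK psi'K).
- move=> p' lip_p'; exists (mx_conj psi' psi p'); split; last exact: (mx_conjK psiK p').
  exact: lipschitz_transport gf' lip_p'.
Qed.

End LipschitzAutomorphisms.

Theorem proposition3p12 (R : realType) (n : nat) (H : 'M[R]_n) (m : nat)
    (g : 'rV[R]_n -> 'M[R[i]]_m)
    (hH : nondeg_sym_form H) (hg : clifford_map H g) (hw : weakly_faithful g) :
  (* Aut(gamma) -> L_gamma, (phi0, phi) |-> phi, is well defined, *)
  (forall f phi, cl_aut H g f phi -> lipschitz g phi) /\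
  (* a homomorphism for componentwise composition, *)
  (forall f1 phi1 f2 phi2, cl_aut H g f1 phi1 -> cl_aut H g f2 phi2 ->
     cl_aut H g (f1 \o f2) (phi1 *m phi2)) /\
  (* injective, *)
  (forall f1 f2 phi, cl_aut H g f1 phi -> cl_aut H g f2 phi -> forall v, f1 v = f2 v) /\
  (* and surjective onto L_gamma; *)
  (forall phi, lipschitz g phi -> exists f, cl_aut H g f phi) /\
  (* in particular, isomorphic representations have isomorphic Lipschitz groups. *)
  (forall (n' : nat) (H' : 'M[R]_n') (m' : nat) (g' : 'rV[R]_n' -> 'M[R[i]]_m'),
     nondeg_sym_form H' -> clifford_map H' g' -> weakly_faithful g' ->
     (exists f (phi : 'M[R[i]]_(m', m)), cl_iso H g H' g' f phi) ->
     exists F : 'M[R[i]]_m -> 'M[R[i]]_m',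
       [/\ (forall p, lipschitz g p -> lipschitz g' (F p)),
           (forall p q, lipschitz g p -> lipschitz g q -> F (p *m q) = F p *m F q),
           (forall p q, lipschitz g p -> lipschitz g q -> F p = F q -> p = q) &
           (forall p', lipschitz g' p' -> exists p, lipschitz g p /\ F p = p')]).
Proof.
split; first exact: cl_aut_lipschitz.
split; first exact: cl_aut_comp.
split; first by move=> f1 f2 phi; apply: cl_aut_inj.
split; first by move=> phi; apply: lipschitz_cl_aut hH.1 hg hw.
move=> n' H' m' g' _ _ _ [f [psi /cl_iso_lipschitz[F [lipF FM F_inj F_surj]]]].
by exists F; split=> // p q _ _ /F_inj.

Qed.
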